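(* Let $G$ be a finite abelian group, $M$ a $\hat G$-linear, left inductive monoid, $e$ a non-zero idempotent of $M$ with $\mathcal J$-class $J$. Then for every $W\in\mathrm{Rep}(\hat G_J,\hat G)$, $W{\uparrow_e}$ is a $\hat G$-linear representation of $M$ (an object of $\mathrm{Rep}(M,\hat G)$) under the action $a(x\otimes w)=(ax)\otimes w$.
   Context: $\hat G=G\sqcup\{0\}$ with $0$ absorbing. $\mathrm{Vect}_{\hat G}$: objects are finite pointed sets with an action of $\hat G$ ($0v=0$, $g0=0$) such that $G$ acts freely on nonzero elements; morphisms $f$ satisfy $f(0)=0$, $f(gv)=gf(v)$, $f(v_1)=f(v_2)\neq0\Rightarrow Gv_1=Gv_2$. A $\hat G$-linear monoid is a finite monoid $M$ with absorbing element $0_M$ containing $G$ as a subgroup of units commuting with all of $M$, with $G$ acting freely by translation on $M\setminus\{0_M\}$. $\mathrm{Rep}(M,\hat G)$: objects of $\mathrm{Vect}_{\hat G}$ with an $M$-action by morphisms of $\mathrm{Vect}_{\hat G}$, $0_M$ acting as zero and $g\in G$ as the scalar $g$. For $a\in M$: $J(a)=MaM$, $\mathcal J_a$ its $\mathcal J$-class ($a\sim b\iff J(a)=J(b)$), $I(a)=\{x\in J(a):MxM\neq J(a)\}$, $P(a)=(J(a)\setminus I(a))\cup\{0\}$ with product $xy$ if in $J(a)\setminus I(a)$ and $0$ otherwise; $M$ acts on $P(a)$ by left translation the same way. $M$ is left inductive if $P(e)$ is an object of $\mathrm{Rep}(M,\hat G)$ under left translation for every idempotent $e$. $G_J=eMe\cap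 J$ (a group with identity $e$), $\hat G_J=G_J\sqcup\{0\}$; $\mathrm{Rep}(\hat G_J,\hat G)$ consists of objects of $\mathrm{Vect}_{\hat G}$ with an action of $\hat G_J$ by morphisms of $\mathrm{Vect}_{\hat G}$, with $e$ acting as identity, $0$ as zero and $ge$ as the scalar $g$. $P(e)e=\{xe:x\in P(e)\}$. $W{\uparrow_e}=P(e)e\otimes_{\hat G_J}W$ is the set of symbols $x\otimes w$ ($x\in P(e)e$, $w\in W$) modulo the equivalence relation generated by $x\alpha\otimes w=x\otimes\alpha w$ ($\alpha\in\hat G_J$), $gx\otimes w=x\otimes gw$ ($g\in G$), and $x\otimes0=0\otimes w$; $G$ acts by $g(x\otimes w)=(gx)\otimes w$, and $ax$ denotes the product in $P(e)$. *)

From HB Require Import structures.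
From mathcomp Require Import all_boot all_fingroup.
Set Implicit Arguments. Unset Strict Implicit. Unset Printing Implicit Defensive.
Local Open Scope group_scope.

Record monData (gT : finGroupType) := MonData {
  mcar :> finType;
  mmul : mcar -> mcar -> mcar;
  mone : mcar;
  mzero : mcar;
  miota : gT -> mcar }.

Section Defs.
Variable gT : finGroupType.

(* An object: finite pointed set (X, z) with an action ga of G; the element 0
   of \hat G acts as the constant map to z. *)
Definition isVect (X : finType) (z : X) (ga : gT -> X -> X) : Prop :=
  [/\ forall x, ga 1 x = x,
      forall g h x, ga (g * h) x = ga g (ga h x),
      forall g, ga g z = z &
      forall g x, x != z -> ga g x = x -> g = 1].

Definition isVectMor (X Y : finType) (zX : X) (gaX : gT -> X -> X)
  (zY : Y) (gaY : gT -> Y -> Y) (f : X -> Y) : Prop :=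
  [/\ f zX = zY,
      forall g x, f (gaX g x) = gaY g (f x) &
      forall v1 v2, f v1 = f v2 -> f v1 != zY -> exists g, v1 = gaX g v2].

Variable M : monData gT.
Declare Scope monoid_scope.
Local Notation "a * b" := (mmul a b) : monoid_scope.
Delimit Scope monoid_scope with M.
Local Notation zero := (mzero M).
Local Notation one := (mone M).
Local Notation iota := (miota M).

Definition GlinearMonoid : Prop :=
  [/\ [/\ associative (@mmul _ M),
          left_id one (@mmul _ M), right_id one (@mmul _ M),
          left_zero zero (@mmul _ M) & right_zero zero (@mmul _ M)],
      [/\ injective iota, iota 1 = one,
          forall g h, iota (g * h) = (iota g * iota h)%M &
          forall g (a : M), (iota g * a)%M = (a * iota g)%M] &
      forall g (x : M), x != zero -> (iota g * x)%M = x -> g = 1].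

Definition isRep (X : finType) (z : X) (ga : gT -> X -> X) (act : M -> X -> X)
  : Prop :=
  [/\ isVect z ga,
      forall a, isVectMor z ga z ga (act a),
      [/\ forall x, act one x = x &
      forall a b x, act (a * b)%M x = act a (act b x)],
      forall x, act zero x = z &
      forall g x, act (iota g) x = ga g x].

Definition Jideal (a : M) : {set M} := [set (x * a * y)%M | x : M, y : M].
Definition Iideal (a : M) : {set M} :=
  [set x in Jideal a | Jideal x != Jideal a].
(* x in J(a) \ I(a), i.e. x lies in the J-class of a *)
Definition inJI (a x : M) : bool := x \in Jideal a :\: Iideal a.
Definition inP (a x : M) : bool := inJI a x || (x == zero).

Lemma inP_zero (a : M) : inP a zero.
Proof. by rewrite /inP eqxx orbT. Qed.

(* the product in P(a) (also the left action of M on P(a)) *)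
Definition mulP (a : M) (x y : M) : M :=
  if inJI a (x * y)%M then (x * y)%M else zero.

Definition Pt (a : M) := {x : M | inP a x}.
Definition pzero (a : M) : Pt a := exist _ zero (inP_zero a).
Definition pact (a : M) (b : M) (x : Pt a) : Pt a :=
  insubd (pzero a) (b * val x)%M.
Arguments pzero : clear implicits.
Arguments pact : clear implicits.

Definition left_inductive : Prop :=
  forall f : M, (f * f)%M = f ->
    isRep (pzero f) (fun g => pact f (iota g)) (pact f).

Variable e : M.
Definition eMe : {set M} := [set (e * x * e)%M | x : M].
Definition inGJ (x : M) : bool := (x \in eMe) && inJI e x.
Definition inGJhat (x : M) : bool := inGJ x || (x == zero).

(* Rep(\hat G_J, \hat G); the action of \hat G_J is given by a function on M,
   only its values on \hat G_J matter. *)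
Definition isRepJ (W : finType) (zW : W) (gaW : gT -> W -> W)
  (wact : M -> W -> W) : Prop :=
  [/\ isVect zW gaW,
      forall al, inGJhat al -> isVectMor zW gaW zW gaW (wact al),
      forall al be w, inGJhat al -> inGJhat be ->
        wact (al * be)%M w = wact al (wact be w) &
      [/\ forall w, wact e w = w,
      forall w, wact zero w = zW &
      forall g w, wact (iota g * e)%M w = gaW g w]].

Definition PeSet : {set M} := [set mulP e (val y) e | y : Pt e].

(* The induced object W^e = P(e)e (x)_{\hat G_J} W *)
Section Induced.
Variables (W : finType) (zW : W) (gaW : gT -> W -> W) (wact : M -> W -> W).

Definition Dom : {set M * W} := [set p | p.1 \in PeSet].

Definition gen (p q : M * W) : bool :=
  [&& p \in Dom, q \in Dom &
  [|| [exists x : M, exists al : M, exists w : W,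
        [&& inGJhat al, p == (mulP e x al, w) & q == (x, wact al w)]],
      [exists g : gT, exists x : M, exists w : W,
        (p == (mulP e (iota g) x, w)) && (q == (x, gaW g w))] |
      [exists x : M, exists w : W, (p == (x, zW)) && (q == (zero, w))]]].

Definition tequiv : rel (M * W) := connect (fun p q => gen p q || gen q p).
Definition cls (p : M * W) : {set M * W} := [set q | tequiv p q].

Definition Ind := {C : {set M * W} | [exists p in Dom, C == cls p]}.
End Induced.
End Defs.

From HB Require Import structures.
From mathcomp Require Import all_boot all_fingroup.
Set Implicit Arguments. Unset Strict Implicit. Unset Printing Implicit Defensive.
Local Open Scope group_scope.

(** Every symbol x (x) w of W^e is determined by its coefficient function
    m |-> (e m x) w, where e m x is read in \hat G_J, i.e. as 0 unless it lies in
    the J-class of e. This function is invariant under the relations defining the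
    tensor product. Conversely, let x1 (x) w1 and x2 (x) w2 have the same nonzero
    coefficient function. Stability of the finite monoid M gives m with m x1 = e;
    then beta = e m x2 lies in G_J and left translation by e m sends both x1 beta
    and x2 to beta, so left inductivity and the freeness of the G-action give
    x1 beta = x2, whence x2 (x) w2 = x1 (x) beta w2 = x1 (x) w1. Hence W^e embeds
    into the functions M -> W, where a acts by m |-> m a and g by m |-> m iota(g),
    and the axioms of Rep(M, \hat G) are checked pointwise. *)

Local Notation "a ** b" := (mmul a b) (at level 40, left associativity).

Lemma iter_periodic (T : finType) (f : T -> T) (x : T) :
  exists i p, 0 < p /\ iter (i + p) f x = iter i f x.
Proof.
pose h (k : 'I_#|T|.+1) := iter k f x.
have /injectivePn[k [l neq_kl eq_hkl]] : ~~ injectiveb h.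
  by apply/injectiveP => /leq_card; rewrite card_ord ltnn.
rewrite /h in eq_hkl.
case: (ltngtP k l) => [lt_kl|lt_lk|eq_kl]; last by rewrite (val_inj eq_kl) eqxx in neq_kl.
- by exists k, (l - k); rewrite subn_gt0 subnKC ?(ltnW lt_kl).
- by exists l, (k - l); rewrite subn_gt0 subnKC ?(ltnW lt_lk).
Qed.

Section Monoid.
Variables (gT : finGroupType) (M : monData gT).
Hypothesis HM : GlinearMonoid M.

Local Notation z0 := (mzero M).
Local Notation one := (mone M).
Local Notation io := (miota M).

Lemma mulmA (a b c : M) : a ** (b ** c) = a ** b ** c.
Proof. by case: HM => [[]]. Qed.
Lemma mul1m (a : M) : one ** a = a.
Proof. by case: HM => [[]]. Qed.
Lemma mulm1 (a : M) : a ** one = a.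
Proof. by case: HM => [[]]. Qed.
Lemma mul0m (a : M) : z0 ** a = z0.
Proof. by case: HM => [[]]. Qed.
Lemma mulm0 (a : M) : a ** z0 = z0.
Proof. by case: HM => [[]]. Qed.

Lemma miota1 : io 1 = one.
Proof. by case: HM => _ []. Qed.
Lemma miotaM g h : io (g * h) = io g ** io h.
Proof. by case: HM => _ []. Qed.
Lemma miotaC g (a : M) : io g ** a = a ** io g.
Proof. by case: HM => _ []. Qed.
Lemma miota_free g (x : M) : x != z0 -> io g ** x = x -> g = 1.
Proof. by case: HM => _ _; apply. Qed.
Lemma miotaVK g (a : M) : io g^-1 ** (io g ** a) = a.
Proof. by rewrite mulmA -miotaM mulVg miota1 mul1m. Qed.

Definition mpow (a : M) n := iter n (mmul a) one.

Lemma mpowSr (a : M) n : mpow a n.+1 = mpow a n ** a.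
Proof.
elim: n => [|n IHn]; first by rewrite /= mulm1 mul1m.
by rewrite /mpow [LHS]iterS -/(mpow a n.+1) [in LHS]IHn mulmA.
Qed.

Lemma mpowD (a : M) m n : mpow a (m + n) = mpow a m ** mpow a n.
Proof.
elim: m => [|m IHm]; first by rewrite mul1m.
by rewrite addSn /= IHm mulmA.
Qed.

Lemma JidealP (y z : M) : reflect (exists u v, y = u ** z ** v) (y \in Jideal z).
Proof.
apply: (iffP imset2P) => [[u v _ _ ->]|[u [v ->]]]; first by exists u, v.
by exists u v.
Qed.

Lemma Jideal_refl (y : M) : y \in Jideal y.
Proof. by apply/JidealP; exists one, one; rewrite mul1m mulm1. Qed.

Lemma Jideal_trans (y z t : M) : y \in Jideal z -> z \in Jideal t -> y \in Jideal t.
Proof.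
move=> /JidealP[u [v ->]] /JidealP[u' [v' ->]].
by apply/JidealP; exists (u ** u'), (v' ** v); rewrite !mulmA.
Qed.

Lemma Jideal_mull (a y : M) : a ** y \in Jideal y.
Proof. by apply/JidealP; exists a, one; rewrite mulm1. Qed.

Lemma Jideal_mulr (a y : M) : y ** a \in Jideal y.
Proof. by apply/JidealP; exists one, a; rewrite mul1m. Qed.

Lemma Jideal0 (y : M) : z0 \in Jideal y.
Proof. by apply/JidealP; exists z0, one; rewrite !mul0m. Qed.

Lemma inJIE (a y : M) : inJI a y = (y \in Jideal a) && (a \in Jideal y).
Proof.
rewrite /inJI /Iideal !inE; have [ya|] //= := boolP (y \in Jideal a).
rewrite andbT negbK; apply/eqP/idP => [->|ay]; first exact: Jideal_refl.
by apply/setP => t; apply/idP/idP => /Jideal_trans; apply.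
Qed.

Lemma inJI_refl (a : M) : inJI a a.
Proof. by rewrite inJIE Jideal_refl. Qed.

Lemma inJI_miotal g (a y : M) : inJI a (io g ** y) = inJI a y.
Proof.
have gyy : io g ** y \in Jideal y by apply: Jideal_mull.
have ygy : y \in Jideal (io g ** y) by rewrite -{1}(miotaVK g y) Jideal_mull.
rewrite !inJIE; apply/andP/andP => -[ya ay]; split.
- exact: Jideal_trans ygy ya.
- exact: Jideal_trans ay gyy.
- exact: Jideal_trans gyy ya.
- exact: Jideal_trans ay ygy.
Qed.

(* Stability of finite monoids: if z is J-equivalent to yz, it is L-equivalent to it. *)
Lemma mull_stable (y z : M) : z \in Jideal (y ** z) -> exists l, l ** (y ** z) = z.
Proof.
case/JidealP=> u [v z_uyzv].
have z_pow k : z = mpow (u ** y) k ** z ** mpow v k.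
  elim: k => [|k IHk]; first by rewrite mul1m mulm1.
  by rewrite mpowSr /= {1}IHk {1}z_uyzv !mulmA.
have [i [[|p] [//= _ periodic]]] := iter_periodic (mmul (u ** y)) one.
exists (mpow (u ** y) p ** u).
have z_fix : mpow (u ** y) p.+1 ** z = z.
  by rewrite (z_pow i) !mulmA -mpowD addnC; congr (_ ** _ ** _); apply: periodic.
by rewrite -[RHS]z_fix mpowSr !mulmA.
Qed.

Section Idempotent.
Variable e : M.
Hypotheses (He0 : e != z0) (Hee : e ** e = e).

Lemma inJI_zero : ~~ inJI e z0.
Proof.
rewrite inJIE Jideal0 /=; apply/JidealP => -[u [v e0]].
by move: He0; rewrite e0 mulm0 mul0m eqxx.
Qed.

Lemma mulP_inJI (a b : M) : inJI e (a ** b) -> mulP e a b = a ** b.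
Proof. by rewrite /mulP => ->. Qed.

Lemma mulP_notinJI (a b : M) : ~~ inJI e (a ** b) -> mulP e a b = z0.
Proof. by rewrite /mulP => /negbTE ->. Qed.

Lemma PeSetP (x : M) : (x \in PeSet e) = (x == z0) || inJI e x && (x ** e == x).
Proof.
apply/imsetP/idP => [[y _ ->]|/orP[/eqP->|/andP[ex /eqP xe]]].
- rewrite /mulP; case: ifP => [ey|_]; last by rewrite eqxx.
  by rewrite ey -mulmA Hee eqxx orbT.
- by exists (pzero e); rewrite // /mulP /= mul0m (negbTE inJI_zero).
- have Px : inP e x by rewrite /inP ex.
  by exists (exist _ x Px); rewrite // /mulP /= xe ex.
Qed.

Lemma PeSet0 : z0 \in PeSet e.
Proof. by rewrite PeSetP eqxx. Qed.

Lemma PeSet_mulr (x : M) : x \in PeSet e -> x ** e = x.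
Proof. by rewrite PeSetP => /orP[/eqP->|/andP[_ /eqP]]; rewrite ?mul0m. Qed.

Lemma PeSet_inJI (x : M) : x \in PeSet e -> x != z0 -> inJI e x.
Proof. by rewrite PeSetP => /orP[/eqP->|/andP[]]; rewrite ?eqxx. Qed.

Lemma PeSet_Jideal (x : M) : x \in PeSet e -> x \in Jideal e.
Proof.
have [->|x0 Px] := eqVneq x z0; first by rewrite Jideal0.
by move: (PeSet_inJI Px x0); rewrite inJIE => /andP[].
Qed.

Lemma PeSet_mulP (a x : M) : x \in PeSet e -> mulP e a x \in PeSet e.
Proof.
move=> Px; rewrite /mulP; case: ifP => [ax|_]; last exact: PeSet0.
by rewrite PeSetP ax -mulmA PeSet_mulr // eqxx orbT.
Qed.

Lemma eMeP (y : M) : reflect (exists x, y = e ** x ** e) (y \in eMe e).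
Proof. by apply: (iffP imsetP) => -[x]; exists x. Qed.

Lemma inGJ_inJI (al : M) : inGJ e al -> inJI e al.
Proof. by case/andP. Qed.

Lemma inGJ_mull (al : M) : inGJ e al -> e ** al = al.
Proof. by case/andP => /eMeP[x ->] _; rewrite !mulmA Hee. Qed.

Lemma inGJ_intro (y : M) : inJI e y -> e ** y = y -> y ** e = y -> inGJ e y.
Proof. by move=> ey ey_y ye_y; rewrite /inGJ ey andbT; apply/eMeP; exists y; rewrite ey_y ye_y. Qed.

Lemma inGJhat_GJ (al : M) : inGJ e al -> inGJhat e al.
Proof. by rewrite /inGJhat => ->. Qed.

Lemma inGJ_miotae g : inGJ e (io g ** e).
Proof.
apply: inGJ_intro; first by rewrite inJI_miotal inJI_refl.
  by rewrite mulmA -miotaC -mulmA Hee.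
by rewrite -mulmA Hee.
Qed.

Lemma inGJ_emx (m x : M) : x ** e = x -> inJI e (e ** (m ** x)) -> inGJ e (e ** (m ** x)).
Proof. by move=> xe ex; apply: inGJ_intro; rewrite // ?mulmA ?Hee // -!mulmA xe. Qed.

Lemma Lclass_e (x : M) : inJI e x -> x ** e = x -> exists m, m ** x = e.
Proof.
move=> ex xe; have : e \in Jideal (x ** e) by rewrite xe; move: ex; rewrite inJIE => /andP[].
by case/mull_stable => l le; exists l; rewrite -xe.
Qed.

Lemma inJI_mulGJ (x al : M) : inJI e x -> x ** e = x -> inGJ e al -> inJI e (x ** al).
Proof.
move=> ex xe Gal; have [m mx] := Lclass_e ex xe.
move: ex (inGJ_inJI Gal); rewrite !inJIE => /andP[xJ _] /andP[_ eJal].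
rewrite (Jideal_trans (Jideal_mulr _ _) xJ) /=; apply: Jideal_trans eJal _.
by apply/JidealP; exists m, one; rewrite mulm1 mulmA mx inGJ_mull.
Qed.

Lemma inJI_mulGJE (y al : M) : y \in Jideal e -> y ** e = y -> inGJ e al ->
  inJI e (y ** al) = inJI e y.
Proof.
move=> yJ ye Gal; apply/idP/idP => [|ey]; last exact: inJI_mulGJ.
by rewrite !inJIE yJ => /andP[_ eJ]; apply: Jideal_trans eJ (Jideal_mulr _ _).
Qed.

Hypothesis HL : left_inductive M.

(* Left inductivity: left translation by [a] on P(e) is a morphism of Vect_{\hat G}. *)
Lemma eq_mull_inJI (a v1 v2 : M) : inJI e v1 -> inJI e v2 -> a ** v1 = a ** v2 ->
  inJI e (a ** v1) -> exists g, v1 = io g ** v2.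
Proof.
move=> ev1 ev2 av12 eav1; have [_ /(_ a)[_ _ pact_mor] _ _ _] := HL Hee.
have Pv1 : inP e v1 by rewrite /inP ev1.
have Pv2 : inP e v2 by rewrite /inP ev2.
have Pav1 : inP e (a ** v1) by rewrite /inP eav1.
pose pv1 : Pt e := exist _ v1 Pv1; pose pv2 : Pt e := exist _ v2 Pv2.
have pact_eq : pact a pv1 = pact a pv2 by rewrite /pact /= av12.
have pact_neq0 : pact a pv1 != pzero e.
  apply/eqP => /(congr1 val); rewrite /= insubdK // => av1_0.
  by move: eav1; rewrite av1_0 (negbTE inJI_zero).
have [g /(congr1 val)] := pact_mor _ _ pact_eq pact_neq0.
by rewrite /= insubdK ?unfold_in /inP ?inJI_miotal ?ev2 //; exists g.
Qed.

Section Induced.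
Variables (W : finType) (zW : W) (gaW : gT -> W -> W) (wact : M -> W -> W).
Hypothesis HW : isRepJ e zW gaW wact.

Lemma wact_e w : wact e w = w.
Proof. by case: HW => _ _ _ []. Qed.
Lemma wact0 w : wact z0 w = zW.
Proof. by case: HW => _ _ _ []. Qed.
Lemma wact_miotae g w : wact (io g ** e) w = gaW g w.
Proof. by case: HW => _ _ _ []. Qed.
Lemma wactM (al be : M) w : inGJhat e al -> inGJhat e be ->
  wact (al ** be) w = wact al (wact be w).
Proof. by case: HW => _ _ + _; apply. Qed.
Lemma wact_zW (al : M) : inGJhat e al -> wact al zW = zW.
Proof. by case: HW => _ + _ _ => /[apply] -[]. Qed.
Lemma wact_gaW (al : M) g w : inGJhat e al -> wact al (gaW g w) = gaW g (wact al w).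
Proof. by case: HW => _ + _ _ => /[apply] -[]. Qed.
Lemma gaW_zW g : gaW g zW = zW.
Proof. by case: HW => [[]]. Qed.
Lemma gaW_free g w : w != zW -> gaW g w = w -> g = 1.
Proof. by case: HW => [[_ _ _]] + _ _ _; apply. Qed.

Local Notation gen := (gen e zW gaW wact).
Local Notation tequiv := (tequiv e zW gaW wact).
Local Notation cls := (cls e zW gaW wact).
Local Notation Dom := (Dom e W).

Lemma DomE (p : M * W) : (p \in Dom) = (p.1 \in PeSet e).
Proof. by rewrite inE. Qed.

Definition coef (p : M * W) : {ffun M -> W} :=
  [ffun m => if inJI e (e ** (m ** p.1)) then wact (e ** (m ** p.1)) p.2 else zW].

Lemma coefE p m : coef p m =
  if inJI e (e ** (m ** p.1)) then wact (e ** (m ** p.1)) p.2 else zW.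
Proof. by rewrite ffunE. Qed.

Lemma coef0x w : coef (z0, w) =1 fun=> zW.
Proof. by move=> m; rewrite coefE /= !mulm0 (negbTE inJI_zero). Qed.

Lemma coef_zero p : coef p z0 = zW.
Proof. by rewrite coefE mul0m mulm0 (negbTE inJI_zero). Qed.

Lemma coefx0 x : x \in PeSet e -> coef (x, zW) =1 fun=> zW.
Proof.
move=> Px m; rewrite coefE /=; case: ifP => // ex.
by rewrite wact_zW // inGJhat_GJ // inGJ_emx // PeSet_mulr.
Qed.

Lemma coef_witness x w : x \in PeSet e -> x != z0 ->
  exists2 m, m ** x = e & coef (x, w) m = w.
Proof.
move=> Px x0; have [m mx] := Lclass_e (PeSet_inJI Px x0) (PeSet_mulr Px).
by exists m; rewrite // coefE /= mx Hee inJI_refl wact_e.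
Qed.

Lemma coef_mulP a x w m : x \in PeSet e -> coef (mulP e a x, w) m = coef (x, w) (m ** a).
Proof.
move=> Px; rewrite /mulP /=; case: ifP => [ax|nax]; first by rewrite !coefE /= !mulmA.
rewrite coef0x coefE /=; case: ifP => // emax; exfalso; move/negP: nax; apply.
rewrite inJIE (Jideal_trans (Jideal_mull _ _) (PeSet_Jideal Px)) /=.
move: emax; rewrite inJIE => /andP[_ /Jideal_trans]; apply.
by apply/JidealP; exists (e ** m), one; rewrite mulm1 !mulmA.
Qed.

Lemma coef_miota x w g m : x \in PeSet e ->
  coef (x, w) (m ** io g) = gaW g (coef (x, w) m).
Proof.
move=> Px; rewrite !coefE /=.
have -> : e ** (m ** io g ** x) = io g ** (e ** (m ** x)).
  by rewrite !mulmA -(miotaC g (e ** m)) !mulmA.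
rewrite inJI_miotal; case: ifP => [emx|_]; last by rewrite gaW_zW.
have Gemx := inGJ_emx (PeSet_mulr Px) emx.
by rewrite -{1}(inGJ_mull Gemx) mulmA wactM ?wact_miotae // inGJhat_GJ // inGJ_miotae.
Qed.

Lemma coef_mulP_GJ x al w : x \in PeSet e -> inGJhat e al ->
  coef (mulP e x al, w) =1 coef (x, wact al w).
Proof.
move=> Px /orP[Gal|/eqP->] m; last first.
  by rewrite mulP_notinJI ?mulm0 ?inJI_zero // coef0x wact0 coefx0.
have [->|x0] := eqVneq x z0; first by rewrite mulP_notinJI ?mul0m ?inJI_zero // !coef0x.
have xe := PeSet_mulr Px.
rewrite mulP_inJI ?inJI_mulGJ ?PeSet_inJI // !coefE /=.
have -> : e ** (m ** (x ** al)) = e ** (m ** x) ** al by rewrite !mulmA.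
have emxe : e ** (m ** x) ** e = e ** (m ** x) by rewrite -!mulmA xe.
rewrite inJI_mulGJE ?Jideal_mulr //; case: ifP => // emx.
by rewrite wactM ?inGJhat_GJ ?inGJ_emx.
Qed.

Lemma coef_gaW x g w : x \in PeSet e ->
  coef (mulP e (io g) x, w) =1 coef (x, gaW g w).
Proof.
move=> Px m; rewrite coef_mulP // coef_miota // !coefE /=.
case: ifP => [emx|_]; last by rewrite gaW_zW.
by rewrite wact_gaW // inGJhat_GJ // inGJ_emx // PeSet_mulr.
Qed.

Lemma coef_gen p q : gen p q -> coef p = coef q.
Proof.
case/and3P => Dp Dq /or3P[].
- case/existsP=> x /existsP[al /existsP[w /and3P[Gal /eqP Ep /eqP Eq]]].
  by subst p q; rewrite DomE /= in Dq; apply/ffunP; apply: coef_mulP_GJ.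
- case/existsP=> g /existsP[x /existsP[w /andP[/eqP Ep /eqP Eq]]].
  by subst p q; rewrite DomE /= in Dq; apply/ffunP; apply: coef_gaW.
- case/existsP=> x /existsP[w /andP[/eqP Ep /eqP Eq]].
  by subst p q; rewrite DomE /= in Dp; apply/ffunP => m; rewrite coef0x coefx0.
Qed.

Lemma gen_connect_sym : connect_sym (fun p q => gen p q || gen q p).
Proof. by apply: sym_connect_sym => p q; rewrite orbC. Qed.

Lemma coef_tequiv p q : tequiv p q -> coef p = coef q.
Proof.
case/connectP => s + ->; elim: s p => [|r s IHs] p //= /andP[pr rs].
by rewrite -(IHs r rs); case/orP: pr => /coef_gen.
Qed.

Lemma tequiv_zero p : p \in Dom -> coef p =1 (fun=> zW) -> tequiv p (z0, zW).
Proof.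
case: p => x w; rewrite DomE /= => Px coef_p.
have [->|w0] := eqVneq w zW.
  apply: connect1; apply/orP; left; apply/and3P; split; rewrite ?DomE ?PeSet0 //.
  by apply/or3P/Or33/existsP; exists x; apply/existsP; exists zW; rewrite !eqxx.
have [->|x0] := eqVneq x z0.
  apply: connect1; apply/orP; right; apply/and3P; split; rewrite ?DomE ?PeSet0 //.
  by apply/or3P/Or33/existsP; exists z0; apply/existsP; exists w; rewrite !eqxx.
by have [m _] := coef_witness w Px x0; rewrite coef_p => /eqP; rewrite eq_sym (negbTE w0).
Qed.

Lemma coef_eq_GJ x1 w1 x2 w2 m0 : x1 \in PeSet e -> x2 \in PeSet e ->
  coef (x1, w1) = coef (x2, w2) -> coef (x1, w1) m0 != zW ->
  exists be, [/\ inGJ e be, x1 ** be = x2 & wact be w2 = w1].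
Proof.
move=> P1 P2 coef12 nz.
have x1_0 : x1 != z0 by apply: contraNneq nz => ->; rewrite coef0x.
have w1_0 : w1 != zW by apply: contraNneq nz => ->; rewrite coefx0.
have [m1 m1x1 coef_m1] := coef_witness w1 P1 x1_0.
pose be := e ** (m1 ** x2).
have ebe : inJI e be.
  by move: w1_0; rewrite -coef_m1 coef12 coefE /=; case: ifP => // _; rewrite eqxx.
have Gbe : inGJ e be := inGJ_emx (PeSet_mulr P2) ebe.
have wbe : wact be w2 = w1 by rewrite -coef_m1 coef12 coefE /= ebe.
have x2_0 : x2 != z0 by apply: contraTneq ebe => x2_0; rewrite /be x2_0 !mulm0 inJI_zero.
have em1_x1be : e ** m1 ** (x1 ** be) = be.
  by rewrite [LHS]mulmA -[e ** m1 ** x1]mulmA m1x1 Hee inGJ_mull.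
have em1_x2 : e ** m1 ** x2 = be by rewrite -mulmA.
have ex1be : inJI e (x1 ** be) := inJI_mulGJ (PeSet_inJI P1 x1_0) (PeSet_mulr P1) Gbe.
have [|g x1be] := eq_mull_inJI ex1be (PeSet_inJI P2 x2_0) (etrans em1_x1be (esym em1_x2)).
  by rewrite em1_x1be.
have gbe : io g ** be = be.
  by rewrite -{2}em1_x1be x1be -{1}em1_x2 !mulmA -(miotaC g (e ** m1)) !mulmA.
have g1 : g = 1 by apply: miota_free gbe; apply: contraTneq ebe => ->; apply: inJI_zero.
by exists be; rewrite x1be g1 miota1 mul1m.
Qed.

Lemma coef_eq_tequiv p q : p \in Dom -> q \in Dom -> coef p = coef q -> tequiv p q.
Proof.
move=> Dp Dq coef_pq.
have [/existsP[m0 nz]|/existsPn coef_p0] := boolP [exists m, coef p m != zW]; last first.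
  have coef_p : coef p =1 fun=> zW by move=> m; apply/eqP; rewrite -[_ == _]negbK coef_p0.
  apply: connect_trans (tequiv_zero Dp coef_p) _; rewrite gen_connect_sym.
  by apply: tequiv_zero; rewrite // -coef_pq.
move: Dp Dq coef_pq nz; case: p => x1 w1; case: q => x2 w2.
rewrite !DomE /= => P1 P2 coef_pq nz.
have [be [Gbe x1be wbe]] := coef_eq_GJ P1 P2 coef_pq nz.
have x1_0 : x1 != z0 by apply: contraNneq nz => ->; rewrite coef0x.
have ex1be : inJI e (x1 ** be) := inJI_mulGJ (PeSet_inJI P1 x1_0) (PeSet_mulr P1) Gbe.
apply: connect1; apply/orP; right; apply/and3P; split; rewrite ?DomE //.
apply/or3P/Or31/existsP; exists x1; apply/existsP; exists be; apply/existsP; exists w2.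
by rewrite /inGJhat Gbe mulP_inJI // x1be wbe !eqxx.
Qed.

Lemma coef_mull_eq a p1 p2 m0 : p1 \in Dom -> p2 \in Dom ->
  (forall m, coef p1 (m ** a) = coef p2 (m ** a)) -> coef p1 (m0 ** a) != zW ->
  exists g, forall m, coef p1 m = coef p2 (m ** io g).
Proof.
case: p1 p2 => x1 w1 [x2 w2]; rewrite !DomE /= => P1 P2 coef12 nz.
have coefa12 : coef (mulP e a x1, w1) = coef (mulP e a x2, w2).
  by apply/ffunP => m; rewrite !coef_mulP.
have nza : coef (mulP e a x1, w1) m0 != zW by rewrite coef_mulP.
have [be [Gbe ax1be wbe]] := coef_eq_GJ (PeSet_mulP a P1) (PeSet_mulP a P2) coefa12 nza.
have eax1 : inJI e (a ** x1).
  by apply: contraNT nza => /mulP_notinJI ->; rewrite coef0x eqxx.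
rewrite mulP_inJI // in ax1be.
have x1_0 : x1 != z0 by apply: contraTneq eax1 => ->; rewrite mulm0 inJI_zero.
have ex1be : inJI e (x1 ** be) := inJI_mulGJ (PeSet_inJI P1 x1_0) (PeSet_mulr P1) Gbe.
have eax1be : inJI e (a ** x1 ** be) by rewrite inJI_mulGJ // -mulmA PeSet_mulr.
have eax2 : inJI e (a ** x2).
  by apply: contraTT eax1be => /mulP_notinJI ax2; rewrite ax1be ax2 inJI_zero.
rewrite mulP_inJI // in ax1be.
have x2_0 : x2 != z0 by apply: contraTneq eax2 => ->; rewrite mulm0 inJI_zero.
have [|g x1be] := eq_mull_inJI ex1be (PeSet_inJI P2 x2_0) (etrans (mulmA _ _ _) ax1be).
  by rewrite mulmA.
exists g => m; rewrite -wbe -coef_mulP_GJ ?inGJhat_GJ // mulP_inJI // x1be.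
by rewrite -coef_mulP // mulP_inJI // inJI_miotal PeSet_inJI.
Qed.

Lemma Dom_mulP a p : p \in Dom -> (mulP e a p.1, p.2) \in Dom.
Proof. by rewrite !DomE; apply: PeSet_mulP. Qed.

Lemma cls_tequiv p q : cls p = cls q -> tequiv p q.
Proof.
move=> cls_pq; have : q \in cls p by rewrite cls_pq inE; apply: connect0.
by rewrite inE.
Qed.

Lemma tequiv_cls p q : tequiv p q -> cls p = cls q.
Proof.
move=> pq; apply/setP => r; rewrite !inE; apply/idP/idP; last exact: connect_trans.
by apply: connect_trans; rewrite gen_connect_sym.
Qed.

Local Notation Ind := (Ind e zW gaW wact).

(* The fallback point lies in [Dom] for every [M], so [mkI] needs no hypothesis
   on [M]; it is only ever applied to points of [Dom]. *)
Definition mkI_cls (p : M * W) : {set M * W} :=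
  cls (if p \in Dom then p else (mulP e z0 e, zW)).

Lemma mkI_clsP p : [exists q in Dom, mkI_cls p == cls q].
Proof.
apply/existsP; rewrite /mkI_cls; case: ifP => [Dp|_]; first by exists p; rewrite eqxx andbT.
by exists (mulP e z0 e, zW); rewrite DomE eqxx andbT; apply/imsetP; exists (pzero e).
Qed.

Definition mkI (p : M * W) : Ind := exist _ (mkI_cls p) (mkI_clsP p).

Lemma val_mkI p : p \in Dom -> val (mkI p) = cls p.
Proof. by rewrite /= /mkI_cls => ->. Qed.

(* Locked, since failed unifications would otherwise unfold the [pick] into
   the enumeration of [M * W]. *)
Definition rep : Ind -> M * W :=
  locked (fun C => odflt (z0, zW) [pick p in Dom | val C == cls p]).

Lemma repP C : rep C \in Dom /\ val C = cls (rep C).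
Proof.
rewrite /rep -lock; case: pickP => [p /andP[Dp /eqP //]|no_rep].
by case/existsP: (valP C) => p /andP[Dp /eqP C_p]; move: (no_rep p); rewrite Dp C_p eqxx.
Qed.

Definition zI : Ind := mkI (z0, zW).
Definition actI (a : M) (C : Ind) : Ind := mkI (mulP e a (rep C).1, (rep C).2).
Definition coefI (C : Ind) : {ffun M -> W} := coef (rep C).

Lemma coefI_cls C p : p \in Dom -> val C = cls p -> coefI C = coef p.
Proof.
move=> Dp C_p; have [_ C_rep] := repP C.
by apply: coef_tequiv; apply: cls_tequiv; rewrite -C_rep.
Qed.

Lemma coefI_inj : injective coefI.
Proof.
move=> C1 C2 coef12; apply: val_inj.
have [D1 ->] := repP C1; have [D2 ->] := repP C2.
exact/tequiv_cls/coef_eq_tequiv.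
Qed.

Lemma val_zI : val zI = cls (z0, zW).
Proof. by rewrite val_mkI ?DomE ?PeSet0. Qed.

Lemma coefI_zI : coefI zI =1 fun=> zW.
Proof. by move=> m; rewrite (coefI_cls _ val_zI) ?DomE ?PeSet0 ?coef0x. Qed.

Lemma coefI_actI a C m : coefI (actI a C) m = coefI C (m ** a).
Proof.
have [D _] := repP C; rewrite (coefI_cls (Dom_mulP a D)) ?val_mkI ?Dom_mulP //.
by move: D; rewrite /coefI; case: (rep C) => x w; rewrite DomE; apply: coef_mulP.
Qed.

Lemma coefI_miota C g m : coefI C (m ** io g) = gaW g (coefI C m).
Proof.
by have [] := repP C; rewrite /coefI; case: (rep C) => x w; rewrite DomE => /coef_miota.
Qed.

Lemma val_actI a C p : p \in Dom -> val C = cls p -> val (actI a C) = cls (mulP e a p.1, p.2).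
Proof.
move=> Dp C_p; have [D _] := repP C.
rewrite val_mkI ?Dom_mulP //; apply/tequiv_cls/coef_eq_tequiv; rewrite ?Dom_mulP //.
have := coefI_cls Dp C_p; move: D Dp; rewrite /coefI.
case: (rep C) => x w; case: p {C_p} => y v; rewrite !DomE /= => Px Py coef_xy.
by apply/ffunP => m; rewrite !coef_mulP // coef_xy.
Qed.

Lemma coefI_neq0 C : C != zI -> exists m, coefI C m != zW.
Proof.
move=> C0; have [/existsP//|/existsPn coef_0] := boolP [exists m, coefI C m != zW].
case/eqP: C0; apply: coefI_inj; apply/ffunP => m.
by rewrite coefI_zI; apply/eqP; rewrite -[_ == _]negbK coef_0.
Qed.

Lemma eq_coefI C1 C2 : coefI C1 =1 coefI C2 -> C1 = C2.
Proof. by move=> coef12; apply/coefI_inj/ffunP. Qed.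

Lemma Ind_isVect : isVect zI (fun g => actI (io g)).
Proof.
split.
- by move=> C; apply: eq_coefI => m; rewrite coefI_actI miota1 mulm1.
- by move=> g h C; apply: eq_coefI => m; rewrite !coefI_actI miotaM mulmA.
- by move=> g; apply: eq_coefI => m; rewrite coefI_actI !coefI_zI.
- move=> g C C0 gC; have [m0 nz] := coefI_neq0 C0.
  by apply: gaW_free nz _; rewrite -coefI_miota -coefI_actI gC.
Qed.

Lemma actI_isVectMor a :
  isVectMor zI (fun g => actI (io g)) zI (fun g => actI (io g)) (actI a).
Proof.
split.
- by apply: eq_coefI => m; rewrite coefI_actI !coefI_zI.
- by move=> g C; apply: eq_coefI => m; rewrite !coefI_actI -!mulmA miotaC.
- move=> C1 C2 aC12 aC1_0; have [m0] := coefI_neq0 aC1_0; rewrite coefI_actI => nz.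
  have coef12 m : coefI C1 (m ** a) = coefI C2 (m ** a) by rewrite -!coefI_actI aC12.
  have [[D1 _] [D2 _]] := (repP C1, repP C2).
  have [g coef_g] := coef_mull_eq D1 D2 coef12 nz.
  by exists g; apply: eq_coefI => m; rewrite coefI_actI; apply: coef_g.
Qed.

Lemma actI1 C : actI one C = C.
Proof. by apply: eq_coefI => m; rewrite coefI_actI mulm1. Qed.

Lemma actIM a b C : actI (a ** b) C = actI a (actI b C).
Proof. by apply: eq_coefI => m; rewrite !coefI_actI mulmA. Qed.

Lemma actI0 C : actI z0 C = zI.
Proof. by apply: eq_coefI => m; rewrite coefI_actI mulm0 coefI_zI coef_zero. Qed.

End Induced.
End Idempotent.
End Monoid.

Theorem mainTheorem9 (gT : finGroupType) (M : monData gT) (e : M)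
  (W : finType) (zW : W) (gaW : gT -> W -> W) (wact : M -> W -> W) :
  abelian [set: gT] ->
  GlinearMonoid M ->
  left_inductive M ->
  mmul e e = e ->
  e != mzero M ->
  isRepJ e zW gaW wact ->
  exists (zI : Ind e zW gaW wact)
         (gaI : gT -> Ind e zW gaW wact -> Ind e zW gaW wact)
         (actI : M -> Ind e zW gaW wact -> Ind e zW gaW wact),
    [/\ val zI = cls e zW gaW wact (mzero M, zW),
        forall g (C : Ind e zW gaW wact) (p : M * W),
          p \in Dom e W -> val C = cls e zW gaW wact p ->
          val (gaI g C) = cls e zW gaW wact (mulP e (miota M g) p.1, p.2),
        forall a (C : Ind e zW gaW wact) (p : M * W),
          p \in Dom e W -> val C = cls e zW gaW wact p ->
          val (actI a C) = cls e zW gaW wact (mulP e a p.1, p.2) &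
        isRep zI gaI actI].
Proof.
(* Commutativity of G is automatic: [miota] embeds it into the centre of M. *)
move=> _ HM HL Hee He0 HW.
exists (zI e zW gaW wact), (fun g => actI (miota M g)), (@actI _ _ e _ zW gaW wact).
split; first exact: val_zI.
- by move=> g C p; apply: val_actI.
- by move=> a C p; apply: val_actI.
split; first exact: Ind_isVect.
- by move=> a; apply: actI_isVectMor.
- by split=> [C|a b C]; [apply: actI1 | apply: actIM].
- by move=> C; apply: actI0.
- by [].
Qed.
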